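(* For $k=1,2,3,4$, the number of $\sim_2$-equivalence classes of $[GL(k,2)]^{2}$ (i.e. the cardinality of $Cat_{k,2}$) is $1,\ 4,\ 58,\ 4822$, respectively.
   Context: $[GL(k,2)]^{2}$ is the set of $k\times 2k$ binary matrices $(A_1\mid A_2)$ with $A_1,A_2\in GL(k,2)$. For $A,B\in[GL(k,2)]^{2}$, $A\sim_2B$ iff $A=P_kBP_{2k}$ for some $k\times k$ permutation matrix $P_k$ and some $2k\times 2k$ permutation matrix $P_{2k}$. $Cat_{k,2}$ denotes a set of representatives of the $\sim_2$-classes. *)

From HB Require Import structures.
From mathcomp Require Import all_boot all_order all_algebra all_fingroup.
Set Implicit Arguments. Unset Strict Implicit. Unset Printing Implicit Defensive.
Import GRing.Theory.
Local Open Scope ring_scope.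

(* [GL(k,2)]^2 : k x 2k binary matrices (A1 | A2) with A1, A2 invertible. *)
Definition GL2_pairs (k : nat) : {set 'M['F_2]_(k, k + k)} :=
  [set A | (lsubmx A \in unitmx) && (rsubmx A \in unitmx)].

Definition sim2 (k : nat) (A B : 'M['F_2]_(k, k + k)) : bool :=
  [exists P : 'M['F_2]_k, exists Q : 'M['F_2]_(k + k),
     [&& is_perm_mx P, is_perm_mx Q & A == P *m B *m Q]].

Definition sim2_classes (k : nat) : {set {set 'M['F_2]_(k, k + k)}} :=
  [set [set B in GL2_pairs k | sim2 A B] | A in GL2_pairs k].

Definition card_Cat2 (k : nat) : nat := #|sim2_classes k|.

From mathcomp Require Import all_boot all_order all_algebra all_fingroup.
From mathcomp Require Import zify.
Set Implicit Arguments. Unset Strict Implicit. Unset Printing Implicit Defensive.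

(* Permuting the 2k columns of A only permutes its multiset of columns, so
   A ~_2 B iff some row permutation of A has the same column multiset as B.
   We record a column multiset by its count vector, the length-2^k vector of
   multiplicities of the bit columns of length k.  A row permutation acts on
   count vectors by the induced permutation of the 2^k coordinates, so a class
   is determined by the lexicographically least count vector in its orbit, its
   key.  The keys are exactly the count vectors v (length 2^k, sum 2k) that are
   least in their orbit and split as v = u + (v - u) into the count vectors of
   two invertible k x k matrices.  Such a v vanishes at the zero column and has
   entries at most 2, which prunes the enumeration of candidates. *)

(* Short-circuiting [all] and [has]: the boolean connectives are ordinary
   functions, so under call-by-value evaluation [all] would visit the whole
   list. *)
Fixpoint allf {T} (f : T -> bool) (s : seq T) : bool :=
  if s is x :: s' then (if f x then allf f s' else false) else true.
Fixpoint hasf {T} (f : T -> bool) (s : seq T) : bool :=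
  if s is x :: s' then (if f x then true else hasf f s') else false.

Lemma allfE T (f : T -> bool) s : allf f s = all f s.
Proof. by elim: s => //= x s ->; case: (f x). Qed.

Lemma hasfE T (f : T -> bool) s : hasf f s = has f s.
Proof. by elim: s => //= x s ->; case: (f x). Qed.

Lemma cons_inj T (x : T) : injective (cons x).
Proof. by move=> a b []. Qed.

Fixpoint bitseqs (k : nat) : seq (seq bool) :=
  if k is k'.+1 then map (cons false) (bitseqs k') ++ map (cons true) (bitseqs k')
  else [:: [::]].

Lemma mem_bitseqs k c : (c \in bitseqs k) = (size c == k).
Proof.
elim: k c => [|k IH] [|b c] //=; rewrite mem_cat.
  by apply/negbTE; rewrite negb_or; apply/andP; split; apply/mapP => -[].
have notin_other b' : b != b' -> (b :: c \in map (cons b') (bitseqs k)) = false.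
  by move=> /negbTE Hb; apply/mapP => -[d _ [/eqP]]; rewrite Hb.
rewrite eqSS -IH; case: b notin_other => H.
  by rewrite (H false) // (mem_map (@cons_inj _ true)).
by rewrite (H true) // (mem_map (@cons_inj _ false)) orbF.
Qed.

Lemma bitseqs_uniq k : uniq (bitseqs k).
Proof.
elim: k => //= k IH; rewrite cat_uniq !map_inj_uniq //; try exact: cons_inj.
by rewrite IH /= andbT; apply/hasPn => _ /mapP [y _ ->]; apply/mapP => -[].
Qed.

Lemma size_bitseqs k : size (bitseqs k) = 2 ^ k.
Proof. by elim: k => //= k IH; rewrite size_cat !size_map IH expnS mul2n addnn. Qed.

Lemma bitseqs_head k : exists r, bitseqs k = nseq k false :: r.
Proof. by elim: k => [|k [r IH]]; [exists [::] | rewrite /= IH; eexists]. Qed.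

Fixpoint lexleq (s t : seq nat) : bool :=
  match s, t with
  | [::], _ => true
  | _ :: _, [::] => false
  | a :: s', b :: t' => (a < b) || ((a == b) && lexleq s' t')
  end.

Lemma lexleq_refl s : lexleq s s.
Proof. by elim: s => //= a s ->; rewrite eqxx orbT. Qed.

Lemma lexleq_anti s t : lexleq s t -> lexleq t s -> s = t.
Proof. by elim: s t => [|a s IH] [|b t] //=; case: ltngtP => //= -> /IH H /H ->. Qed.

Lemma lexleq_trans s t u : lexleq s t -> lexleq t u -> lexleq s u.
Proof.
elim: s t u => [|a s IH] [|b t] [|c u] //=.
case: (ltngtP a b) => //= [ab _|<- H1].
  by case: (ltngtP b c) => //= [bc|<-] _; rewrite ?(ltn_trans ab bc) ?ab.
by case: (ltngtP a c) => //= _; apply: IH.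
Qed.

Lemma lexleq_total s t : lexleq s t || lexleq t s.
Proof. by elim: s t => [|a s IH] [|b t] //=; case: ltngtP => //= <-; rewrite !eqxx. Qed.

Definition lexmin (x : seq nat) (s : seq (seq nat)) :=
  foldr (fun a m => if lexleq a m then a else m) x s.

Lemma lexmin_mem x s : lexmin x s \in x :: s.
Proof.
elim: s => [|a s IH] /=; first by rewrite inE.
case: ifP => _; first by rewrite !inE eqxx orbT.
by move: IH; rewrite !inE; case/orP => ->; rewrite ?orbT.
Qed.

Lemma lexmin_le x s y : y \in x :: s -> lexleq (lexmin x s) y.
Proof.
elim: s y => [|a s IH] y /=; first by rewrite inE => /eqP ->; apply: lexleq_refl.
have IHs z : z \in x :: s -> lexleq (lexmin x s) z by apply: IH.
rewrite !inE; case: ifP => H /or3P [/eqP-> | /eqP-> | Hy].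
- exact: lexleq_trans H (IHs _ (mem_head _ _)).
- exact: lexleq_refl.
- by apply: lexleq_trans H (IHs _ _); rewrite inE Hy orbT.
- exact/IHs/mem_head.
- by move: (lexleq_total a (lexmin x s)); rewrite H.
- by apply: IHs; rewrite inE Hy orbT.
Qed.

Definition vperm (t v : seq nat) := [seq nth 0 v i | i <- t].

(* A fused [lexleq s (vperm t w)] that does not build [vperm t w]. *)
Fixpoint lexleq_vperm (w s t : seq nat) : bool :=
  match s, t with
  | [::], _ => true
  | _ :: _, [::] => false
  | a :: s', i :: t' => let b := nth 0 w i in
      if a < b then true else if a == b then lexleq_vperm w s' t' else false
  end.

Lemma lexleq_vpermE w s t : lexleq_vperm w s t = lexleq s (vperm t w).
Proof. by elim: s t => [|a s IH] [|i t] //=; rewrite IH; case: ltngtP. Qed.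

Fixpoint compositions (n m : nat) : seq (seq nat) :=
  if n is n'.+1 then [seq i :: w | i <- iota 0 m.+1, w <- compositions n' (m - i)]
  else if m == 0 then [:: [::]] else [::].

Lemma mem_compositions n m w :
  (w \in compositions n m) = (size w == n) && (sumn w == m).
Proof.
elim: n m w => [|n IH] m w; first by case: w => [|a w]; case: m.
apply/allpairsPdep/idP => [[i [u [Hi Hu ->]]]|].
  move: Hu; rewrite IH /= eqSS => /andP [-> /eqP ->].
  by rewrite mem_iota in Hi; apply/eqP; lia.
case: w => [|a w] // /andP [Hs /eqP Hm]; rewrite /= in Hs Hm.
exists a, w; split => //; first by rewrite mem_iota; lia.
by rewrite IH -eqSS Hs; apply/eqP; lia.
Qed.

Lemma compositions_uniq n m : uniq (compositions n m).
Proof.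
elim: n m => [|n IH] m; first by case: m.
by apply: allpairs_uniq_dep => [||[i u] [j v] _ _ /= [-> ->]] //; apply: iota_uniq.
Qed.

(* Counts without building the list of compositions. *)
Fixpoint count_compositions (f : seq nat -> bool) (n m : nat) (pre : seq nat)
    (acc : nat) : nat :=
  if n is n'.+1 then
    foldl (fun a i => count_compositions f n' (m - i) (i :: pre) a) acc (iota 0 m.+1)
  else if m == 0 then f (rev pre) + acc else acc.

Lemma count_compositionsE f n m pre acc :
  count_compositions f n m pre acc =
  count f [seq rev pre ++ w | w <- compositions n m] + acc.
Proof.
elim: n m pre acc => [|n IH] m pre acc; first by case: m => //=; rewrite cats0 addn0.
have foldlE l a : foldl (fun a i => count_compositions f n (m - i) (i :: pre) a) a l =
    count f [seq rev pre ++ w | w <- [seq i :: w | i <- l, w <- compositions n (m - i)]] + a.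
  elim: l a => [|i l IHl] a //=; rewrite IHl IH map_cat count_cat addnA.
  congr (_ + _); rewrite addnC -map_comp; congr (count f _ + _).
  by apply: eq_map => w /=; rewrite rev_cons cat_rcons.
exact: foldlE.
Qed.

Fixpoint subvectors (v : seq nat) (m : nat) : seq (seq nat) :=
  if v is a :: v' then [seq i :: u | i <- iota 0 (minn a m).+1, u <- subvectors v' (m - i)]
  else if m == 0 then [:: [::]] else [::].

Lemma mem_subvectors v m u :
  (u \in subvectors v m) = [&& size u == size v, all2 leq u v & sumn u == m].
Proof.
elim: v m u => [|a v IH] m u; first by case: u => [|b u]; case: m.
apply/allpairsPdep/idP => [[i [w [Hi Hw ->]]]|].
  move: Hw; rewrite IH /= eqSS => /and3P [-> -> /eqP ->].
  rewrite mem_iota /= ltnS leq_min in Hi; case/andP: Hi => -> Hm.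
  by apply/eqP; lia.
case: u => [|b u] // /and3P [Hs /andP [Hb Ha] /eqP Hm]; rewrite /= in Hs Hm.
exists b, u; split => //; first by rewrite mem_iota; lia.
by rewrite IH; apply/and3P; split; [exact Hs | exact Ha | apply/eqP; lia].
Qed.

Definition vsub (v u : seq nat) := [seq p.1 - p.2 | p <- zip v u].

Lemma size_vsub v u : size u = size v -> size (vsub v u) = size v.
Proof. by move=> H; rewrite size_map size_zip H minnn. Qed.

Lemma nth_vsub v u i : size u = size v -> nth 0 (vsub v u) i = nth 0 v i - nth 0 u i.
Proof. by elim: v u i => [|a v IH] [|b u] [|i] //= [/IH]. Qed.

Lemma all2_leq_nth v u i : all2 leq u v -> nth 0 u i <= nth 0 v i.
Proof. by elim: u v i => [|b u IH] [|a v] [|i] //= /andP [? /IH]. Qed.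

Lemma sumn_vsub v u : size u = size v -> all2 leq u v -> sumn (vsub v u) + sumn u = sumn v.
Proof.
elim: v u => [|a v IH] [|b u] //= [Hs] /andP [H1 H2].
by rewrite -(IH u) // -/(vsub v u); lia.
Qed.

(** * Count vectors of column multisets *)

Section CountVectors.
Variable k : nat.

Definition sized (s : seq (seq bool)) := all (fun c => size c == k) s.
Definition colcount (s : seq (seq bool)) : seq nat :=
  [seq count_mem x s | x <- bitseqs k].
Definition cols_of_count (v : seq nat) : seq (seq bool) :=
  flatten [seq nseq p.1 p.2 | p <- zip v (bitseqs k)].

Lemma sized_mem_bitseqs s x : sized s -> x \in s -> x \in bitseqs k.
Proof. by move=> /allP H /H; rewrite mem_bitseqs. Qed.

Lemma sized_take n s : sized s -> sized (take n s).
Proof. by move=> /allP H; apply/allP => x /mem_take /H. Qed.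

Lemma sized_drop n s : sized s -> sized (drop n s).
Proof. by move=> /allP H; apply/allP => x /mem_drop /H. Qed.

Lemma size_colcount s : size (colcount s) = 2 ^ k.
Proof. by rewrite size_map size_bitseqs. Qed.

Lemma nth_colcount s x : x \in bitseqs k ->
  nth 0 (colcount s) (index x (bitseqs k)) = count_mem x s.
Proof. by move=> Hx; rewrite (nth_map x) ?index_mem // nth_index. Qed.

Lemma colcount_eq s t : sized s -> sized t -> (colcount s == colcount t) = perm_eq s t.
Proof.
move=> Hs Ht; apply/eqP/idP => [H|/seq.permP H]; last by apply: eq_map => x; apply: H.
apply/allP => x; rewrite mem_cat => Hx.
have Hx' : x \in bitseqs k by case/orP: Hx; apply: sized_mem_bitseqs.
by rewrite /= -!(nth_colcount _ Hx') H.
Qed.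

Lemma sumn_colcount s : sized s -> sumn (colcount s) = size s.
Proof.
elim: s => [|c s IH] /=; first by rewrite /colcount; elim: (bitseqs k) => //= x l ->.
move=> /andP [Hc /IH <-]; rewrite /colcount /=.
have sumnD l : sumn [seq (c == x) + count_mem x s | x <- l] =
               count_mem c l + sumn [seq count_mem x s | x <- l].
  by elim: l => //= x l ->; rewrite eq_sym; lia.
by rewrite sumnD count_uniq_mem ?bitseqs_uniq // mem_bitseqs Hc.
Qed.

Lemma colcount_le_cat s t : all2 leq (colcount s) (colcount (s ++ t)).
Proof. by rewrite /colcount; elim: (bitseqs k) => //= x l ->; rewrite count_cat leq_addr. Qed.

Lemma vsub_colcount_cat s t : vsub (colcount (s ++ t)) (colcount s) = colcount t.
Proof.
by rewrite /vsub /colcount zip_map -map_comp; apply: eq_map => x /=; rewrite count_cat addKn.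
Qed.

Lemma mem_zip_r (S T : eqType) (s : seq S) (t : seq T) a b : (a, b) \in zip s t -> b \in t.
Proof.
elim: s t => [|x s IH] [|y t] //=; rewrite inE => /orP [/eqP [_ ->]|/IH H].
  exact: mem_head.
by rewrite H orbT.
Qed.

Lemma sized_cols_of_count v : sized (cols_of_count v).
Proof.
apply/allP => c /flattenP [w /mapP [[n d] /= /mem_zip_r Hd ->]].
by rewrite mem_nseq => /andP [_ /eqP ->]; rewrite -mem_bitseqs.
Qed.

Lemma count_cols_of_count v x : size v = 2 ^ k -> x \in bitseqs k ->
  count_mem x (cols_of_count v) = nth 0 v (index x (bitseqs k)).
Proof.
rewrite -size_bitseqs /cols_of_count; move: (bitseqs_uniq k).
elim: (bitseqs k) v => [|y l IH] [|a v] //= /andP [Hy Hu] [Hs].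
rewrite inE count_cat count_nseq /=; case/orP => [/eqP ->|Hx].
  rewrite eqxx mul1n -[RHS]addn0; congr (_ + _); apply/eqP; rewrite -leqn0 leqNgt -has_count.
  apply/hasP => -[z /flattenP [w /mapP [[n c] /= /mem_zip_r Hc ->]]].
  by rewrite mem_nseq => /andP [_ /eqP ->] /eqP Hcy; move: Hy; rewrite -Hcy Hc.
have -> : (y == x) = false by apply/negbTE; apply: contraNneq Hy => ->.
by rewrite mul0n add0n IH.
Qed.

Lemma colcount_cols_of_count v : size v = 2 ^ k -> colcount (cols_of_count v) = v.
Proof.
move=> Hv; apply: (@eq_from_nth _ 0); first by rewrite size_colcount.
move=> i; rewrite size_colcount -size_bitseqs => Hi.
by rewrite /colcount (nth_map [::]) // count_cols_of_count ?mem_nth // index_uniq ?bitseqs_uniq.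
Qed.

Lemma size_cols_of_count v : size v = 2 ^ k -> size (cols_of_count v) = sumn v.
Proof.
rewrite -size_bitseqs /cols_of_count size_flatten /shape -map_comp.
by elim: (bitseqs k) v => [|y l IH] [|a v] //= [/IH ->]; rewrite size_nseq.
Qed.

Lemma cols_of_colcount s : sized s -> perm_eq (cols_of_count (colcount s)) s.
Proof.
move=> Hs; rewrite -colcount_eq ?sized_cols_of_count //.
by rewrite colcount_cols_of_count // size_colcount.
Qed.

End CountVectors.

(** * Row permutations acting on bit columns *)

Definition bperm (p : seq nat) (c : seq bool) := [seq nth false c i | i <- p].
Definition pseq k (s : 'S_k) : seq nat := [seq val (s i) | i <- enum 'I_k].

Definition induced_perm k (p : seq nat) :=
  [seq index (bperm p x) (bitseqs k) | x <- bitseqs k].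

Lemma nth_map_ord_enum (T : Type) (x0 : T) n (f : 'I_n -> T) (j : 'I_n) :
  nth x0 [seq f i | i <- enum 'I_n] j = f j.
Proof. by rewrite (nth_map j) ?size_enum_ord ?ltn_ord // nth_ord_enum. Qed.

Lemma size_pseq k (s : 'S_k) : size (pseq s) = k.
Proof. by rewrite size_map size_enum_ord. Qed.

Lemma bperm_pseqE k (s : 'S_k) c : bperm (pseq s) c = [seq nth false c (s i) | i <- enum 'I_k].
Proof. by rewrite /bperm /pseq -map_comp. Qed.

Lemma bperm_pseqM k (s t : 'S_k) c : bperm (pseq s) (bperm (pseq t) c) = bperm (pseq (s * t)) c.
Proof.
by rewrite !bperm_pseqE; apply: eq_map => i; rewrite nth_map_ord_enum permM.
Qed.

Lemma bperm_pseq1 k c : size c = k -> bperm (pseq (1%g : 'S_k)) c = c.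
Proof.
move=> Hc; have -> : pseq (1%g : 'S_k) = iota 0 k.
  by rewrite -val_enum_ord; apply: eq_map => i; rewrite perm1.
by rewrite /bperm map_nth_iota0 -Hc ?take_size.
Qed.

Lemma bperm_pseqK k (s : 'S_k) c : size c = k -> bperm (pseq s^-1) (bperm (pseq s) c) = c.
Proof. by move=> Hc; rewrite bperm_pseqM mulVg bperm_pseq1. Qed.

Lemma bperm_pseq_bitseqs k (s : 'S_k) c : bperm (pseq s) c \in bitseqs k.
Proof. by rewrite mem_bitseqs size_map size_pseq. Qed.

Lemma pseq_permutations k (s : 'S_k) : pseq s \in permutations (iota 0 k).
Proof.
rewrite mem_permutations; apply: uniq_perm; last 1 first.
- move=> x; rewrite mem_iota add0n; apply/mapP/idP => [[i _ ->]|Hx]; first exact: ltn_ord.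
  by exists (s^-1 (Ordinal Hx))%g; rewrite ?mem_enum ?permKV.
- by rewrite map_inj_uniq ?enum_uniq // => i j /val_inj /perm_inj.
- exact: iota_uniq.
Qed.

Lemma permutations_pseq k p : p \in permutations (iota 0 k) -> exists s : 'S_k, p = pseq s.
Proof.
rewrite mem_permutations => Hp.
have Hsz : size p = k by rewrite (perm_size Hp) size_iota.
have Hu : uniq p by rewrite (perm_uniq Hp) iota_uniq.
have Hlt (i : 'I_k) : nth 0 p i < k.
  have : nth 0 p i \in iota 0 k by rewrite -(perm_mem Hp) mem_nth // Hsz.
  by rewrite mem_iota.
have finj : injective (fun i => Ordinal (Hlt i)).
  by move=> i j [] /eqP; rewrite nth_uniq ?Hsz // => /eqP /val_inj.
exists (perm finj); apply: (@eq_from_nth _ 0); rewrite ?size_pseq // Hsz => i Hi.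
by rewrite /pseq (nth_map (Ordinal Hi)) ?size_enum_ord // permE /= nth_enum_ord.
Qed.

Lemma vperm_induced_perm k (s : 'S_k) t : sized k t ->
  vperm (induced_perm k (pseq s)) (colcount k t) = colcount k (map (bperm (pseq s^-1)) t).
Proof.
move=> Ht; rewrite /vperm /induced_perm /colcount -map_comp; apply/eq_in_map => x.
rewrite mem_bitseqs => /eqP Hx /=.
rewrite nth_colcount ?bperm_pseq_bitseqs // count_map; apply: eq_in_count => c Hc /=.
have Hcs : size c = k by apply/eqP; move/allP: Ht => /(_ c Hc).
apply/eqP/eqP => [->|<-]; first by rewrite bperm_pseqK.
by rewrite bperm_pseqM mulgV bperm_pseq1.
Qed.

Fixpoint xorl (a b : seq bool) : seq bool :=
  match a, b with x :: a', y :: b' => addb x y :: xorl a' b' | _, _ => [::] end.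

Fixpoint xor_select k (sel : seq bool) (t : seq (seq bool)) : seq bool :=
  match sel, t with
  | b :: sel', c :: t' => if b then xorl c (xor_select k sel' t') else xor_select k sel' t'
  | _, _ => nseq k false
  end.

Definition lin_indep k (t : seq (seq bool)) :=
  allf (fun sel => if hasf id sel then hasf id (xor_select k sel t) else true) (bitseqs k).

Lemma size_xorl a b : size (xorl a b) = minn (size a) (size b).
Proof. by elim: a b => [|x a IH] [|y b] /=; rewrite ?IH; lia. Qed.

Lemma nth_xorl a b i : i < size a -> i < size b ->
  nth false (xorl a b) i = nth false a i (+) nth false b i.
Proof. by elim: a b i => [|x a IH] [|y b] [|i] //= H1 H2; apply: IH. Qed.

Lemma size_xor_select k sel t : sized k t -> size (xor_select k sel t) = k.
Proof.
elim: sel t => [|b sel IH] [|c t] /=; rewrite ?size_nseq // => /andP [/eqP Hc /IH].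
by case: b; rewrite ?size_xorl ?Hc => ->; rewrite ?minnn.
Qed.

Lemma nth_xor_select k sel t i : sized k t -> size sel = size t -> i < k ->
  nth false (xor_select k sel t) i =
  odd (\sum_(j < size t) (nth false sel j && nth false (nth [::] t j) i)).
Proof.
elim: sel t => [|b sel IH] [|c t] //=; first by rewrite big_ord0 nth_nseq => _ _ ->.
move=> /andP [/eqP Hc Ht] [Hs] Hi; rewrite big_ord_recl /= oddD -IH //.
by case: b => //=; rewrite nth_xorl ?Hc ?size_xor_select //; case: (nth false c i).
Qed.

Definition bounded_count (v : seq nat) :=
  if head 0 v == 0 then allf (fun a => a <= 2) v else false.

Definition splittable k (v : seq nat) :=
  hasf (fun u => if lin_indep k (cols_of_count k u)
                 then lin_indep k (cols_of_count k (vsub v u)) else false)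
       (subvectors v k).

Definition induced_perms k := [seq induced_perm k p | p <- permutations (iota 0 k)].

Definition orbit_lexmin (T : seq (seq nat)) (v : seq nat) := allf (fun t => lexleq_vperm v v t) T.

Definition is_key (T : seq (seq nat)) k (v : seq nat) :=
  if bounded_count v then (if orbit_lexmin T v then splittable k v else false) else false.

Definition nkeys k := count_compositions (is_key (induced_perms k) k) (2 ^ k) (k + k) [::] 0.

Lemma nkeysE k : nkeys k = count (is_key (induced_perms k) k) (compositions (2 ^ k) (k + k)).
Proof. by rewrite /nkeys count_compositionsE addn0 map_id. Qed.

(** * Matrices over F_2 *)

Import GRing.Theory.

Section Matrices.
Local Open Scope ring_scope.

Definition mxcols m n (A : 'M['F_2]_(m, n)) : seq (seq bool) :=
  [seq [seq A i j != 0 | i <- enum 'I_m] | j <- enum 'I_n].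
Definition mx_of_cols m n (t : seq (seq bool)) : 'M['F_2]_(m, n) :=
  \matrix_(i, j) (nth false (nth [::] t j) i)%:R.

Lemma F2_natr_neq0 (x : 'F_2) : x = (x != 0)%:R.
Proof. by case: x => [[|[|n]] Hx] //; apply/val_inj. Qed.

Lemma F2_bool_neq0 (b : bool) : ((b%:R : 'F_2) != 0) = b.
Proof. by case: b; rewrite ?oner_neq0 ?eqxx. Qed.

Lemma F2_nat_neq0 (n : nat) : ((n%:R : 'F_2) != 0) = odd n.
Proof. by rewrite -(Fp_nat_mod (isT : prime 2)) modn2 F2_bool_neq0. Qed.

Lemma size_mxcols m n (A : 'M['F_2]_(m, n)) : size (mxcols A) = n.
Proof. by rewrite size_map size_enum_ord. Qed.

Lemma sized_mxcols m n (A : 'M['F_2]_(m, n)) : sized m (mxcols A).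
Proof. by apply/allP => c /mapP [j _ ->]; rewrite size_map size_enum_ord. Qed.

Lemma nth_mxcols m n (A : 'M['F_2]_(m, n)) (i : 'I_m) (j : 'I_n) :
  nth false (nth [::] (mxcols A) j) i = (A i j != 0).
Proof. by rewrite /mxcols !nth_map_ord_enum. Qed.

Lemma nth_mxcols_nat m n (A : 'M['F_2]_(m, n)) j (Hj : (j < n)%N) :
  nth [::] (mxcols A) j = [seq A i (Ordinal Hj) != 0 | i <- enum 'I_m].
Proof.
rewrite /mxcols (nth_map (Ordinal Hj)) ?size_enum_ord //; apply: eq_map => i.
by congr (A i _ != 0); apply: val_inj; rewrite /= nth_enum_ord.
Qed.

Lemma mxcols_mx_of_cols m n t : size t = n -> sized m t -> mxcols (mx_of_cols m n t) = t.
Proof.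
move=> Hs Hw; apply: (@eq_from_nth _ [::]); rewrite size_mxcols // => j Hj.
have Hsz : size (nth [::] t j) = m by apply/eqP/(allP Hw)/mem_nth; rewrite Hs.
rewrite (nth_mxcols_nat _ (Hj : (j < n)%N)).
apply: (@eq_from_nth _ false); rewrite size_map size_enum_ord ?Hsz // => i Hi.
by rewrite (nth_map (Ordinal Hi)) ?size_enum_ord // mxE F2_bool_neq0 nth_enum_ord.
Qed.

Lemma mxcols_row_perm m n (s : 'S_m) (A : 'M['F_2]_(m, n)) :
  mxcols (row_perm s A) = map (bperm (pseq s)) (mxcols A).
Proof.
rewrite /mxcols -map_comp; apply: eq_map => j /=.
by rewrite bperm_pseqE; apply: eq_map => i; rewrite mxE nth_map_ord_enum.
Qed.

Lemma mxcols_col_perm m n (s : 'S_n) (A : 'M['F_2]_(m, n)) :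
  perm_eq (mxcols (col_perm s A)) (mxcols A).
Proof.
have -> : mxcols (col_perm s A) =
          map (fun j => [seq A i j != 0 | i <- enum 'I_m]) (map s (enum 'I_n)).
  by rewrite -map_comp; apply: eq_map => j; apply: eq_map => i; rewrite mxE.
apply: perm_map; apply: uniq_perm; rewrite ?enum_uniq //.
  by rewrite map_inj_uniq ?enum_uniq //; apply: perm_inj.
by move=> j; rewrite mem_enum; apply/mapP; exists (s^-1 j)%g; rewrite ?mem_enum ?permKV.
Qed.

Lemma perm_mxcols m n (A B : 'M['F_2]_(m, n)) :
  perm_eq (mxcols A) (mxcols B) -> exists s : 'S_n, A = col_perm s B.
Proof.
have Hsz : size (mxcols B) == n by rewrite size_mxcols.
move=> H; have /tuple_permP [s Hs] : perm_eq (mxcols A) (Tuple Hsz) by [].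
exists s; apply/matrixP => i j; rewrite mxE.
rewrite (F2_natr_neq0 (A i j)) (F2_natr_neq0 (B i (s j))) -!nth_mxcols Hs.
by rewrite -(tnth_nth [::] [tuple tnth (Tuple Hsz) (s i0) | i0 < n] j) tnth_mktuple (tnth_nth [::]).
Qed.

Lemma mxcols_lsub m n1 n2 (A : 'M['F_2]_(m, n1 + n2)) : mxcols (lsubmx A) = take n1 (mxcols A).
Proof.
apply: (@eq_from_nth _ [::]); first by rewrite size_mxcols size_takel // size_mxcols leq_addr.
move=> j; rewrite size_mxcols => Hj; have Hj' := leq_trans Hj (leq_addr n2 n1).
rewrite nth_take // (nth_mxcols_nat _ Hj) (nth_mxcols_nat _ Hj'); apply: eq_map => i.
by rewrite mxE; congr (A i _ != 0); apply: val_inj.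
Qed.

Lemma mxcols_rsub m n1 n2 (A : 'M['F_2]_(m, n1 + n2)) : mxcols (rsubmx A) = drop n1 (mxcols A).
Proof.
apply: (@eq_from_nth _ [::]); first by rewrite size_mxcols size_drop size_mxcols addKn.
move=> j; rewrite size_mxcols => Hj.
have Hj' : (n1 + j < n1 + n2)%N by rewrite ltn_add2l.
rewrite nth_drop (nth_mxcols_nat _ Hj) (nth_mxcols_nat _ Hj'); apply: eq_map => i.
by rewrite mxE; congr (A i _ != 0); apply: val_inj.
Qed.

Lemma mxcols_eq_col m n (M N : 'M['F_2]_(m, n)) j j' :
  [seq M i j != 0 | i <- enum 'I_m] = [seq N i j' != 0 | i <- enum 'I_m] ->
  M *m delta_mx j (0 : 'I_1) = N *m delta_mx j' (0 : 'I_1).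
Proof.
move=> H; rewrite -!colE; apply/matrixP => i z; rewrite !mxE.
rewrite (F2_natr_neq0 (M i j)) (F2_natr_neq0 (N i j')).
by move: (congr1 (fun l => nth false l i) H); rewrite !nth_map_ord_enum => ->.
Qed.

Lemma rV_F2_neq0 k (v : 'rV['F_2]_k) : (v != 0) = has (fun i => v 0 i != 0) (enum 'I_k).
Proof.
apply/idP/hasP => [Hv|[i _]]; last by apply: contraNneq => ->; rewrite mxE.
have [i Hi] : exists i, v 0 i != 0.
  apply/existsP; apply: contraR Hv; rewrite negb_exists => /forallP H.
  by apply/eqP/matrixP => i j; rewrite (ord1 i) mxE; apply/eqP; move: (H j); rewrite negbK.
by exists i; rewrite ?mem_enum.
Qed.

Lemma xor_select_mxcols k (M : 'M['F_2]_k) (u : 'rV['F_2]_k) :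
  xor_select k [seq u 0 j != 0 | j <- enum 'I_k] (mxcols M) =
  [seq (u *m M^T) 0 i != 0 | i <- enum 'I_k].
Proof.
apply: (@eq_from_nth _ false).
  by rewrite size_xor_select ?sized_mxcols // size_map size_enum_ord.
move=> i; rewrite size_xor_select ?sized_mxcols // => Hi.
rewrite nth_xor_select ?sized_mxcols //; last by rewrite size_map size_enum_ord size_mxcols.
rewrite (nth_map (Ordinal Hi)) ?size_enum_ord // -[i]/(nat_of_ord (Ordinal Hi)) nth_ord_enum.
move: (Ordinal Hi) => I; rewrite size_mxcols !mxE -F2_nat_neq0 natr_sum.
congr (_ != 0); apply: eq_bigr => j _; rewrite !mxE nth_map_ord_enum nth_mxcols.
by rewrite {2}(F2_natr_neq0 (u 0 j)) {2}(F2_natr_neq0 (M I j)) -natrM mulnb.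
Qed.

Lemma unitmx_lin_indep k (M : 'M['F_2]_k) : (M \in unitmx) = lin_indep k (mxcols M).
Proof.
rewrite -unitmx_tr -row_free_unit /lin_indep allfE.
apply/idP/idP => [Hf|Hi].
  apply/allP => sel; rewrite mem_bitseqs => /eqP Hsel; rewrite !hasfE; case: ifP => // Hs.
  pose u : 'rV['F_2]_k := \row_j ((nth false sel j)%:R : 'F_2).
  have Hsu : [seq u 0 j != 0 | j <- enum 'I_k] = sel.
    apply: (@eq_from_nth _ false); rewrite size_map size_enum_ord ?Hsel // => j Hj.
    by rewrite (nth_map (Ordinal Hj)) ?size_enum_ord // mxE F2_bool_neq0 nth_enum_ord.
  rewrite -Hsu xor_select_mxcols has_map -rV_F2_neq0 mulmx_free_eq0 //.
  by rewrite rV_F2_neq0; move: Hs; rewrite -Hsu has_map.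
apply: inj_row_free => u Hu; apply/eqP; apply: contraTT Hi => Hu0.
apply/allPn; exists [seq u 0 j != 0 | j <- enum 'I_k].
  by rewrite mem_bitseqs size_map size_enum_ord.
by rewrite !hasfE has_map -rV_F2_neq0 Hu0 xor_select_mxcols has_map -rV_F2_neq0 Hu eqxx.
Qed.

Lemma lin_indep_perm k t t' : sized k t -> sized k t' -> size t = k -> perm_eq t t' ->
  lin_indep k t = lin_indep k t'.
Proof.
move=> Ht Ht' Hs Hp; have Hs' : size t' = k by rewrite -(perm_size Hp).
rewrite -(mxcols_mx_of_cols Hs Ht) -(mxcols_mx_of_cols Hs' Ht') in Hp *.
case/perm_mxcols: Hp => s ->.
by rewrite -!unitmx_lin_indep col_permE unitmx_mul unitmx_perm andbT.
Qed.

Lemma unitmx_mxcols_uniq k (M : 'M['F_2]_k) : M \in unitmx -> uniq (mxcols M).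
Proof.
move=> Hu; rewrite /mxcols map_inj_uniq ?enum_uniq // => j j' /mxcols_eq_col H.
have := congr1 (mulmx (invmx M)) H; rewrite !mulKmx // => /matrixP /(_ j 0).
by rewrite !mxE !eqxx /=; case: eqP => // _ /eqP; rewrite eq_sym oner_eq0.
Qed.

Lemma unitmx_mxcols_zero k (M : 'M['F_2]_k) : M \in unitmx -> nseq k false \notin mxcols M.
Proof.
move=> Hu; apply/mapP => -[j _ Hj].
have H : [seq M i j != 0 | i <- enum 'I_k] = [seq (0 : 'M['F_2]_k) i j != 0 | i <- enum 'I_k].
  rewrite -Hj -[X in nseq X]size_enum_ord.
  by elim: (enum 'I_k) => //= i l ->; rewrite mxE eqxx.
have := congr1 (mulmx (invmx M)) (mxcols_eq_col H).
rewrite mul0mx mulmx0 mulKmx // => /matrixP /(_ j 0).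
by rewrite !mxE !eqxx /= => /eqP; rewrite oner_eq0.
Qed.

(** * The relation ~_2 and the class key *)

Variable k : nat.
Implicit Types A B : 'M['F_2]_(k, k + k).

Lemma sim2P A B : reflect (exists s t, A = perm_mx s *m B *m perm_mx t) (sim2 A B).
Proof.
apply: (iffP existsP) => [[P /existsP [Q]]|].
  by case/and3P => /is_perm_mxP [s ->] /is_perm_mxP [t ->] /eqP ->; exists s, t.
case=> s [t ->]; exists (perm_mx s); apply/existsP; exists (perm_mx t).
by rewrite !perm_mx_is_perm eqxx.
Qed.

Lemma sim2_refl A : sim2 A A.
Proof. by apply/sim2P; exists 1%g, 1%g; rewrite !perm_mx1 mul1mx mulmx1. Qed.

Lemma sim2_sym A B : sim2 A B -> sim2 B A.
Proof.
move=> /sim2P [s [t ->]]; apply/sim2P; exists s^-1%g, t^-1%g.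
by rewrite !mulmxA -perm_mxM mulVg perm_mx1 mul1mx -mulmxA -perm_mxM mulgV perm_mx1 mulmx1.
Qed.

Lemma sim2_trans A B C : sim2 A B -> sim2 B C -> sim2 A C.
Proof.
move=> /sim2P [s [t ->]] /sim2P [s' [t' ->]]; apply/sim2P; exists (s * s')%g, (t' * t)%g.
by rewrite !perm_mxM !mulmxA.
Qed.

Lemma colcount_mulmx_perm n (X : 'M['F_2]_(k, n)) (t : 'S_n) :
  colcount k (mxcols (X *m perm_mx t)) = colcount k (mxcols X).
Proof.
apply/eqP; rewrite colcount_eq ?sized_mxcols //.
by rewrite -[t]invgK -col_permE mxcols_col_perm.
Qed.

Definition key_orbit A := [seq colcount k (mxcols (row_perm s A)) | s <- enum {perm 'I_k}].
Definition class_key A := lexmin (colcount k (mxcols A)) (key_orbit A).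

Lemma key_orbitP A w :
  reflect (exists s : 'S_k, w = colcount k (mxcols (row_perm s A))) (w \in key_orbit A).
Proof.
by apply: (iffP mapP) => [[s _ ->]|[s ->]]; exists s; rewrite ?mem_enum.
Qed.

Lemma mem_key_orbit A w : (w \in colcount k (mxcols A) :: key_orbit A) = (w \in key_orbit A).
Proof.
rewrite inE; case: eqP => // ->; apply/esym/key_orbitP; exists 1%g; by rewrite row_perm1.
Qed.

Lemma class_key_orbit A : class_key A \in key_orbit A.
Proof. by rewrite -mem_key_orbit lexmin_mem. Qed.

Lemma class_key_le A w : w \in key_orbit A -> lexleq (class_key A) w.
Proof. by rewrite -mem_key_orbit; apply: lexmin_le. Qed.

Lemma key_orbit_sim2 A B w : sim2 A B -> w \in key_orbit A -> w \in key_orbit B.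
Proof.
move=> /sim2P [s [t ->]] /key_orbitP [r ->]; apply/key_orbitP; exists (r * s)%g.
by rewrite row_permE !mulmxA -perm_mxM colcount_mulmx_perm -row_permE.
Qed.

Lemma eq_class_key A B : (class_key A == class_key B) = sim2 A B.
Proof.
apply/eqP/idP => [|H]; last first.
  apply: lexleq_anti; apply: class_key_le.
    exact/(key_orbit_sim2 (sim2_sym H))/class_key_orbit.
  exact/(key_orbit_sim2 H)/class_key_orbit.
move: (class_key_orbit A) (class_key_orbit B) => /key_orbitP [s ->] /key_orbitP [t ->] /eqP.
rewrite colcount_eq ?sized_mxcols // => /perm_mxcols [r].
rewrite col_permE !row_permE => H; apply/sim2P; exists (s^-1 * t)%g, r^-1%g.
by rewrite perm_mxM -!mulmxA [perm_mx t *m _]mulmxA -H mulmxA -perm_mxM mulVg perm_mx1 mul1mx.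
Qed.

Lemma orbit_lexmin_class_key A : orbit_lexmin (induced_perms k) (class_key A).
Proof.
rewrite /orbit_lexmin allfE; apply/allP => _ /mapP [p /permutations_pseq [r ->] ->].
rewrite lexleq_vpermE; case/key_orbitP: (class_key_orbit A) => s Hk.
rewrite [in X in lexleq _ X]Hk vperm_induced_perm ?sized_mxcols //.
by rewrite -mxcols_row_perm -row_permM; apply/class_key_le/key_orbitP; eexists.
Qed.

Lemma GL2_pairsE A :
  (A \in GL2_pairs k) = lin_indep k (take k (mxcols A)) && lin_indep k (drop k (mxcols A)).
Proof. by rewrite inE !unitmx_lin_indep mxcols_lsub mxcols_rsub. Qed.

Lemma GL2_pairs_row_perm (s : 'S_k) A : A \in GL2_pairs k -> row_perm s A \in GL2_pairs k.
Proof. by rewrite !inE row_permE -mulmx_lsub -mulmx_rsub !unitmx_mul unitmx_perm. Qed.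

(* Each half of a matrix in [GL(k,2)]^2 has distinct nonzero columns. *)
Lemma bounded_count_GL2 A : A \in GL2_pairs k -> bounded_count (colcount k (mxcols A)).
Proof.
rewrite inE => /andP [H1 H2]; rewrite /bounded_count /colcount.
have -> : mxcols A = mxcols (lsubmx A) ++ mxcols (rsubmx A).
  by rewrite mxcols_lsub mxcols_rsub cat_take_drop.
case: (bitseqs_head k) => r ->; rewrite /= count_cat.
rewrite !(count_memPn (unitmx_mxcols_zero _)) //= allfE.
apply/allP => _ /mapP [x _ ->]; rewrite count_cat !count_uniq_mem ?unitmx_mxcols_uniq //.
by case: (x \in _); case: (x \in _).
Qed.

Lemma splittable_GL2 A : A \in GL2_pairs k -> splittable k (colcount k (mxcols A)).
Proof.
rewrite GL2_pairsE /splittable hasfE.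
have Hw := sized_mxcols A; have Hsz := size_mxcols A.
set s := mxcols A in Hw Hsz *; set s1 := take k s; set s2 := drop k s.
have Hw1 : sized k s1 := sized_take k Hw.
have Hw2 : sized k s2 := sized_drop k Hw.
have Hs1 : size s1 = k by rewrite size_takel // Hsz leq_addr.
have Hs2 : size s2 = k by rewrite size_drop Hsz addKn.
have indep_count t : sized k t -> size t = k ->
    lin_indep k (cols_of_count k (colcount k t)) = lin_indep k t.
  move=> Ht Hst; apply: lin_indep_perm (cols_of_colcount Ht) => //.
    exact: sized_cols_of_count.
  by rewrite size_cols_of_count ?size_colcount // sumn_colcount.
move=> /andP [H1 H2]; rewrite -[s](cat_take_drop k); apply/hasP; exists (colcount k s1).
  by rewrite mem_subvectors !size_colcount eqxx colcount_le_cat sumn_colcount // Hs1 eqxx.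
by rewrite vsub_colcount_cat !indep_count // H1 H2.
Qed.

Lemma is_key_class_key A : A \in GL2_pairs k ->
  (class_key A \in compositions (2 ^ k) (k + k)) && is_key (induced_perms k) k (class_key A).
Proof.
move=> HA; case/key_orbitP: (class_key_orbit A) => s Hk; have HB := GL2_pairs_row_perm s HA.
rewrite /is_key orbit_lexmin_class_key Hk bounded_count_GL2 // splittable_GL2 // andbT.
by rewrite mem_compositions size_colcount sumn_colcount ?sized_mxcols // size_mxcols !eqxx.
Qed.

(* A key is realised by the matrix whose columns are the two halves given by
   its splitting, listed in the order of [bitseqs k]. *)
Lemma is_key_surj (v : seq nat) : v \in compositions (2 ^ k) (k + k) ->
  is_key (induced_perms k) k v -> exists2 B, B \in GL2_pairs k & class_key B = v.
Proof.
rewrite mem_compositions /is_key => /andP [/eqP Hv /eqP Hsv].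
case: (bounded_count v) => //; case Hc : (orbit_lexmin _ v) => //.
rewrite /splittable hasfE => /hasP [u]; rewrite mem_subvectors => /and3P [/eqP Hu Hle /eqP Hsu].
case Hi1 : (lin_indep k _) => // Hi2.
set s := cols_of_count k u ++ cols_of_count k (vsub v u).
have Hu' : size u = (2 ^ k)%N by rewrite Hu.
have Hvs : size (vsub v u) = (2 ^ k)%N by rewrite size_vsub.
have Hs1 : size (cols_of_count k u) = k by rewrite size_cols_of_count.
have Hs2 : size (cols_of_count k (vsub v u)) = k.
  by rewrite size_cols_of_count //; move: (sumn_vsub Hu Hle); rewrite Hsu Hsv; lia.
have Hs : size s = (k + k)%N by rewrite size_cat Hs1 Hs2.
have Hw : sized k s by rewrite /sized all_cat -!/(sized _ _) !sized_cols_of_count.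
have Hcnt : colcount k s = v.
  apply: (@eq_from_nth _ 0%N); rewrite ?size_colcount // -size_bitseqs => i Hi.
  rewrite /colcount (nth_map [::]) // count_cat !count_cols_of_count ?mem_nth //.
  by rewrite !index_uniq ?bitseqs_uniq // nth_vsub // subnKC // all2_leq_nth.
exists (mx_of_cols k (k + k) s).
  by rewrite GL2_pairsE mxcols_mx_of_cols // take_size_cat // drop_size_cat // Hi1 Hi2.
apply: lexleq_anti.
  by apply: class_key_le; rewrite -Hcnt -{1}(mxcols_mx_of_cols Hs Hw) -mem_key_orbit mem_head.
case/key_orbitP: (class_key_orbit (mx_of_cols k (k + k) s)) => r ->.
rewrite mxcols_row_perm mxcols_mx_of_cols // -[r]invgK -vperm_induced_perm // Hcnt.
move: Hc; rewrite /orbit_lexmin allfE => /allP /(_ (induced_perm k (pseq r^-1))).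
by rewrite lexleq_vpermE; apply; apply/mapP; exists (pseq r^-1); rewrite ?pseq_permutations.
Qed.

End Matrices.

Lemma card_imset_undup (T U : finType) (f : T -> U) (D : {set T}) :
  #|[set f x | x in D]| = size (undup [seq f x | x <- enum D]).
Proof.
rewrite -(card_uniqP (undup_uniq _)); apply: eq_card => y.
rewrite mem_undup; apply/imsetP/mapP => [] [x Hx ->]; exists x; by rewrite ?mem_enum in Hx *.
Qed.

Lemma size_undup_map (T U V : eqType) (f : T -> U) (g : T -> V) (s : seq T) :
  {in s &, forall x y, (f x == f y) = (g x == g y)} ->
  size (undup (map f s)) = size (undup (map g s)).
Proof.
elim: s => [|x s IH] //= H.
have H' : {in s &, forall x y, (f x == f y) = (g x == g y)}.
  by move=> a b Ha Hb; apply: H; rewrite inE ?Ha ?Hb orbT.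
have -> : (f x \in map f s) = (g x \in map g s).
  apply/mapP/mapP => -[y Hy E]; exists y => //; apply/eqP.
    by rewrite -H ?inE ?Hy ?eqxx ?orbT // E.
  by rewrite H ?inE ?Hy ?eqxx ?orbT // E.
by case: ifP => _ /=; rewrite IH.
Qed.

Lemma card_Cat2_nkeys k : card_Cat2 k = nkeys k.
Proof.
rewrite nkeysE /card_Cat2 /sim2_classes card_imset_undup (@size_undup_map _ _ _ _ (@class_key k)).
  rewrite -size_filter; apply/perm_size/uniq_perm; rewrite ?undup_uniq ?filter_uniq //.
    exact: compositions_uniq.
  move=> v; rewrite mem_undup mem_filter; apply/mapP/idP => [[A HA ->]|/andP [Hp Hv]].
    by rewrite mem_enum in HA; rewrite andbC is_key_class_key.
  by case: (is_key_surj Hv Hp) => B HB <-; exists B; rewrite ?mem_enum.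
move=> A B; rewrite !mem_enum => HA HB; rewrite eq_class_key; apply/eqP/idP => [E|HAB].
  have : B \in [set C in GL2_pairs k | sim2 B C] by rewrite inE HB sim2_refl.
  by rewrite -E inE => /andP [].
apply/setP => C; rewrite !inE; congr (_ && _).
by apply/idP/idP; [apply: sim2_trans (sim2_sym HAB) | apply: sim2_trans HAB].
Qed.

Theorem proposition10 :
  [/\ card_Cat2 1 = 1%N, card_Cat2 2 = 4%N, card_Cat2 3 = 58%N & card_Cat2 4 = 4822%N].
Proof. by rewrite !card_Cat2_nkeys; split; vm_compute. Qed.
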